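(* In the setting described in the context, the following hold. (i) $\mathcal P_{\mathcal C}+\mathcal P_{\mathcal N}=M(M^TM)^{-1}M^T$, the orthogonal projection onto $\mathrm{col}(M)$. (ii) $$\mathcal P_{\mathcal C}=\sum_{i=r+1}^{r+s}\frac{1}{1-\sigma_i^2}\tilde Z_i\tilde Z_i^T-\sum_{i=r+1}^{r+s}\frac{\sigma_i}{1-\sigma_i^2}\tilde Z_i\tilde W_i^T+\sum_{i=r+s+1}^p\tilde Z_i\tilde Z_i^T,$$ $$\mathcal P_{\mathcal N}=\sum_{i=r+1}^{r+s}\frac{1}{1-\sigma_i^2}\tilde W_i\tilde W_i^T-\sum_{i=r+1}^{r+s}\frac{\sigma_i}{1-\sigma_i^2}\tilde W_i\tilde Z_i^T+\sum_{i=r+s+1}^K\tilde W_i\tilde W_i^T.$$ (iii) For any $x\in\mathrm{col}(\tilde Z_{(r+1):p})$ and $y\in\mathrm{col}(\tilde W_{(r+1):K})$: $\mathcal P_{\mathcal C}(x+y)=x$ and $\mathcal P_{\mathcal N}(x+y)=y$. (iv) For any $x\in\mathbb{R}^n$: $\|\mathcal P_{\mathcal C}^Tx\|\ge\|\tilde Z_{(r+1):p}^Tx\|$.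
   Context: Let $Z\in\mathbb{R}^{n\times p}$ and $W\in\mathbb{R}^{n\times K}$ have orthonormal columns (spanning $\mathrm{col}(X)$ and $S_K(P)$ respectively). Let $Z^TW=U\Sigma V^T$ be an SVD with $U\in\mathbb{R}^{p\times p}$, $V\in\mathbb{R}^{K\times K}$ orthogonal and singular values on the diagonal of $\Sigma$: $\sigma_1=\dots=\sigma_r=1>\sigma_{r+1}\ge\dots\ge\sigma_{r+s}>0=\sigma_{r+s+1}=\cdots$. Put $\tilde Z=ZU$, $\tilde W=WV$; $M_i$ denotes column $i$ and $M_{i:j}$ columns $i$ through $j$ of a matrix. Let $M=(\tilde Z_{(r+1):p},\tilde W_{(r+1):K})$ and $\mathcal P_{\mathcal C}=(\tilde Z_{(r+1):p},0_{n\times(K-r)})(M^TM)^{-1}M^T$, $\mathcal P_{\mathcal N}=(0_{n\times(p-r)},\tilde W_{(r+1):K})(M^TM)^{-1}M^T$. $\|\cdot\|$ is the Euclidean norm. *)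

From HB Require Import structures.
From mathcomp Require Import all_boot all_order all_algebra.
Set Implicit Arguments. Unset Strict Implicit. Unset Printing Implicit Defensive.
Import Order.TTheory GRing.Theory Num.Theory.
Local Open Scope ring_scope.

Lemma shift_ord_proof (r p : nat) (j : 'I_(p - r)) : (r + j < p)%N.
Proof. have := ltn_ord j; rewrite ltn_subRL; by []. Qed.

Definition shift_ord (r p : nat) (j : 'I_(p - r)) : 'I_p := Ordinal (shift_ord_proof j).

(* columns r+1 .. p (1-based) of A, i.e. A_{(r+1):p} *)
Definition tailcols {R : Type} {n p : nat} (r : nat) (A : 'M[R]_(n, p)) : 'M[R]_(n, p - r) :=
  colsub (@shift_ord r p) A.

(* column i (0-based, natural-number index) of A; zero if i is out of range *)
Definition colN {R : pzRingType} {n m : nat} (A : 'M[R]_(n, m)) (i : nat) : 'cV[R]_n :=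
  \col_k (match (insub i : option 'I_m) with Some j => A k j | None => 0 end).

Definition enorm {R : rcfType} {n : nat} (v : 'cV[R]_n) : R :=
  Num.sqrt (\sum_(k < n) v k 0 ^+ 2).

Definition Sigma_mx {R : pzRingType} (p K : nat) (sigma : nat -> R) : 'M[R]_(p, K) :=
  \matrix_(i < p, j < K) (if (i == j :> nat) then sigma i else 0).

Section Proj.
Variables (R : fieldType) (n p K r : nat).
Variables (Zt : 'M[R]_(n, p)) (Wt : 'M[R]_(n, K)).

Definition Mmat : 'M[R]_(n, (p - r) + (K - r)) := row_mx (tailcols r Zt) (tailcols r Wt).

Definition PC : 'M[R]_n :=
  row_mx (tailcols r Zt) (0 : 'M[R]_(n, K - r)) *m invmx (Mmat^T *m Mmat) *m Mmat^T.

Definition PN : 'M[R]_n :=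
  row_mx (0 : 'M[R]_(n, p - r)) (tailcols r Wt) *m invmx (Mmat^T *m Mmat) *m Mmat^T.
End Proj.

(* Let A = Zt_{(r+1):p} and B = Wt_{(r+1):K}.  Both have orthonormal columns and
   A^T B is the rectangular diagonal matrix D of sigma_{r+1}, ..., sigma_{r+s}
   (padded by zeros), so the Gram matrix of M = (A, B) is [[1, D], [D^T, 1]].
   With C = diag ((1 - sigma_i^2)^-1), its inverse is [[C, -C D], [-D^T C, C]],
   as a blockwise product of diagonal matrices shows.  Expanding P_C and P_N with
   this inverse gives (ii); P_C P_C^T = A C A^T with C >= 1 gives (iv); (i) and
   (iii) hold for X (M^T M)^-1 M^T whenever M^T M is invertible.  Neither the
   ordering of the sigma_i nor sigma_1 = ... = sigma_r = 1 is needed. *)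

From HB Require Import structures.
From mathcomp Require Import all_boot all_order all_algebra.
From mathcomp Require Import zify ring.
Set Implicit Arguments. Unset Strict Implicit. Unset Printing Implicit Defensive.
Import Order.TTheory GRing.Theory Num.Theory.
Local Open Scope ring_scope.

Section SigmaMx.
Variable R : comPzRingType.
Implicit Types f g : nat -> R.

Lemma Sigma_mx_eq m1 m2 f g :
  (forall i, (i < m1)%N -> (i < m2)%N -> f i = g i) -> Sigma_mx m1 m2 f = Sigma_mx m1 m2 g.
Proof.
by move=> fg; apply/matrixP => i j; rewrite !mxE; case: eqP => // eq_ij; rewrite fg // eq_ij.
Qed.

Lemma trmx_Sigma_mx m1 m2 f : (Sigma_mx m1 m2 f)^T = Sigma_mx m2 m1 f.
Proof. by apply/matrixP => i j; rewrite !mxE eq_sym; case: eqP => // ->. Qed.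

Lemma Sigma_mxB m1 m2 f g :
  Sigma_mx m1 m2 f - Sigma_mx m1 m2 g = Sigma_mx m1 m2 (fun i => f i - g i).
Proof. by apply/matrixP => i j; rewrite !mxE; case: eqP; rewrite ?subr0. Qed.

Lemma Sigma_mx1 m : 1%:M = Sigma_mx m m (fun=> 1 : R).
Proof. by apply/matrixP => i j; rewrite !mxE -[i == j]/(i == j :> nat); case: eqP. Qed.

Lemma Sigma_mx_mul m1 m2 m3 f g :
  Sigma_mx m1 m2 f *m Sigma_mx m2 m3 g =
  Sigma_mx m1 m3 (fun i => if (i < m2)%N then f i * g i else 0).
Proof.
apply/matrixP => i k; rewrite !mxE.
case: (ltnP i m2) => [lt_i_m2 | le_m2_i].
  rewrite (bigD1 (Ordinal lt_i_m2)) //= !mxE eqxx big1 ?addr0.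
    by case: eqP; rewrite ?mulr0.
  move=> j /eqP ne_ji; rewrite !mxE; case: eqP => [eq_ij|]; last by rewrite mul0r.
  by case: ne_ji; apply: val_inj.
rewrite big1 ?if_same // => j _; rewrite !mxE; case: eqP => [eq_ij|]; last by rewrite mul0r.
by have := ltn_ord j; rewrite -eq_ij ltnNge le_m2_i.
Qed.

Lemma colN_ord n m (X : 'M[R]_(n, m)) (j : 'I_m) : colN X j = col j X.
Proof. by apply/matrixP => a b; rewrite !mxE valK. Qed.

Lemma colN_out n m (X : 'M[R]_(n, m)) i : (m <= i)%N -> colN X i = 0.
Proof.
move=> le_m_i; apply/matrixP => a b; rewrite !mxE; case: insubP => [j lt_i_m _|//].
by move: lt_i_m; rewrite ltnNge le_m_i.
Qed.

Lemma mul_Sigma_mx_tr n m1 m2 (X : 'M[R]_(n, m1)) (Y : 'M[R]_(n, m2)) f :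
  X *m Sigma_mx m1 m2 f *m Y^T = \sum_(0 <= i < m2) f i *: (colN X i *m (colN Y i)^T).
Proof.
apply/matrixP => a b; rewrite summxE big_mkord mxE; apply: eq_bigr => k _.
have XSigmaE : (X *m Sigma_mx m1 m2 f) a k = colN X k a 0 * f k.
  rewrite mxE; case: (ltnP k m1) => [lt_k_m1 | le_m1_k].
    rewrite -[colN X k]/(colN X (Ordinal lt_k_m1)) colN_ord.
    rewrite (bigD1 (Ordinal lt_k_m1)) //= !mxE eqxx big1 ?addr0 //.
    move=> j /eqP ne_jk; rewrite mxE; case: eqP => [eq_jk|]; last by rewrite mulr0.
    by case: ne_jk; apply: val_inj.
  rewrite colN_out // mxE mul0r big1 // => j _.
  rewrite mxE; case: eqP => [eq_jk|]; last by rewrite mulr0.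
  by have := ltn_ord j; rewrite eq_jk ltnNge le_m1_k.
by rewrite XSigmaE !mxE big_ord1 !mxE valK mulrA [f k * _]mulrC.
Qed.

End SigmaMx.

Definition gram_proj {R : comUnitRingType} {n m} (X M : 'M[R]_(n, m)) : 'M[R]_n :=
  X *m invmx (M^T *m M) *m M^T.

Section GramProj.
Variables (R : comUnitRingType) (n m : nat) (M : 'M[R]_(n, m)).

Lemma gram_projDl (X Y : 'M[R]_(n, m)) :
  gram_proj X M + gram_proj Y M = gram_proj (X + Y) M.
Proof. by rewrite /gram_proj -!mulmxDl. Qed.

Lemma trmx_gram (N : 'M[R]_(n, m)) : (N^T *m N)^T = N^T *m N.
Proof. by rewrite trmx_mul trmxK. Qed.

Lemma trmx_gram_proj_self : (gram_proj M M)^T = gram_proj M M.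
Proof. by rewrite /gram_proj !trmx_mul trmxK trmx_inv trmx_gram mulmxA. Qed.

Hypothesis gram_unit : M^T *m M \in unitmx.

Lemma gram_proj_mulmx (X : 'M[R]_(n, m)) : gram_proj X M *m M = X.
Proof. by rewrite /gram_proj -!mulmxA mulVmx // mulmx1. Qed.

Lemma gram_proj_mul_tr (X Y : 'M[R]_(n, m)) :
  gram_proj X M *m (gram_proj Y M)^T = X *m invmx (M^T *m M) *m Y^T.
Proof.
rewrite [in LHS]/gram_proj !trmx_mul trmxK trmx_inv trmx_gram !mulmxA.
by rewrite gram_proj_mulmx.
Qed.

Lemma gram_proj_self_idem : gram_proj M M *m gram_proj M M = gram_proj M M.
Proof. by rewrite {2}/gram_proj !mulmxA gram_proj_mulmx. Qed.

End GramProj.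

Lemma eqmx_gram_proj_self (F : fieldType) n m (M : 'M[F]_(n, m)) :
  M^T *m M \in unitmx -> (gram_proj M M == M^T)%MS.
Proof.
move=> gram_unit; apply/andP; split; first exact: submxMl.
by rewrite -{1}(gram_proj_mulmx gram_unit M) trmx_mul trmx_gram_proj_self submxMl.
Qed.

Lemma gram_proj_row_mx_split (F : fieldType) n m1 m2
    (A : 'M[F]_(n, m1)) (B : 'M[F]_(n, m2)) (x y : 'cV[F]_n) :
  (row_mx A B)^T *m row_mx A B \in unitmx ->
  (x^T <= A^T)%MS -> (y^T <= B^T)%MS ->
  gram_proj (row_mx A 0) (row_mx A B) *m (x + y) = x /\
  gram_proj (row_mx 0 B) (row_mx A B) *m (x + y) = y.
Proof.
move=> gram_unit /submxP[v xE] /submxP[w yE].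
have -> : x + y = row_mx A B *m col_mx v^T w^T.
  by rewrite mul_row_col -[x]trmxK -[y]trmxK xE yE !trmx_mul !trmxK.
rewrite !mulmxA !gram_proj_mulmx // !mul_row_col !mul0mx addr0 add0r.
by rewrite -[x]trmxK -[y]trmxK xE yE !trmx_mul !trmxK.
Qed.

Section TwoFrames.
Variables (R : fieldType) (n p k s : nat) (A : 'M[R]_(n, p)) (B : 'M[R]_(n, k)).
Variable d : nat -> R.
Hypotheses (AtA : A^T *m A = 1%:M) (BtB : B^T *m B = 1%:M).
Hypothesis AtB : A^T *m B = Sigma_mx p k d.
Hypotheses (le_s_p : (s <= p)%N) (le_s_k : (s <= k)%N).
Hypothesis d_eq0 : forall i, (s <= i)%N -> d i = 0.
Hypothesis d_sqr_neq1 : forall i, 1 - d i ^+ 2 != 0.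

Local Notation c := (fun i => (1 - d i ^+ 2)^-1).
Local Notation e := (fun i => d i / (1 - d i ^+ 2)).
Local Notation D := (Sigma_mx p k d).
Local Notation M := (row_mx A B).

Lemma c_eq1 i : (s <= i)%N -> c i = 1.
Proof. by move=> le_s_i /=; rewrite d_eq0 // expr0n subr0 invr1. Qed.

Lemma e_eq0 i : (s <= i)%N -> e i = 0.
Proof. by move=> le_s_i /=; rewrite d_eq0 // mul0r. Qed.

Lemma Sigma_mul_c m m' : Sigma_mx m m' d *m Sigma_mx m' m' c = Sigma_mx m m' e.
Proof. by rewrite Sigma_mx_mul; apply: Sigma_mx_eq => i _ ->. Qed.

(* Pointwise [c i - d i * e i = 1]; truncating the product at [m'] is harmless
   because [d] vanishes from [s] on. *)
Lemma Sigma_c_sub_mul m m' : (s <= m')%N ->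
  Sigma_mx m m c - Sigma_mx m m' d *m Sigma_mx m' m e = 1%:M.
Proof.
move=> le_s_m'; rewrite Sigma_mx_mul Sigma_mxB (Sigma_mx1 _ m); apply: Sigma_mx_eq => i _ _.
have -> : (if (i < m')%N then d i * e i else 0) = d i * e i.
  by case: ltnP => // le_m'_i; rewrite d_eq0 ?mul0r // (leq_trans le_s_m').
by field.
Qed.

Lemma gram_row_mx : M^T *m M = block_mx 1%:M D D^T 1%:M.
Proof.
have BtA : B^T *m A = D^T by rewrite -AtB trmx_mul trmxK.
by rewrite tr_row_mx mul_col_row AtA BtB AtB BtA.
Qed.

Local Notation gram_inv :=
  (block_mx (Sigma_mx p p c) (- Sigma_mx p k e) (- Sigma_mx k p e) (Sigma_mx k k c)).

Lemma gram_row_mx_mul_inv : M^T *m M *m gram_inv = 1%:M.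
Proof.
rewrite gram_row_mx mulmx_block trmx_Sigma_mx !mul1mx !mulmxN !Sigma_mul_c.
by rewrite addNr addrN [- _ + _]addrC !Sigma_c_sub_mul // -scalar_mx_block.
Qed.

Lemma gram_row_mx_unit : M^T *m M \in unitmx.
Proof. by case: (mulmx1_unit gram_row_mx_mul_inv). Qed.

Lemma invmx_gram_row_mx : invmx (M^T *m M) = gram_inv.
Proof.
by rewrite -[LHS]mulmx1 -gram_row_mx_mul_inv mulmxA mulVmx ?mul1mx // gram_row_mx_unit.
Qed.

Lemma gram_proj_left :
  gram_proj (row_mx A 0) M = A *m Sigma_mx p p c *m A^T - A *m Sigma_mx p k e *m B^T.
Proof.
rewrite /gram_proj invmx_gram_row_mx mul_row_block tr_row_mx mul_row_col.
by rewrite !mul0mx !addr0 mulmxN mulNmx.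
Qed.

Lemma gram_proj_right :
  gram_proj (row_mx 0 B) M = B *m Sigma_mx k k c *m B^T - B *m Sigma_mx k p e *m A^T.
Proof.
rewrite /gram_proj invmx_gram_row_mx mul_row_block tr_row_mx mul_row_col.
by rewrite !mul0mx !add0r mulmxN mulNmx addrC.
Qed.

Lemma gram_proj_left_mul_tr :
  gram_proj (row_mx A 0) M *m (gram_proj (row_mx A 0) M)^T = A *m Sigma_mx p p c *m A^T.
Proof.
rewrite gram_proj_mul_tr ?gram_row_mx_unit // invmx_gram_row_mx mul_row_block.
by rewrite tr_row_mx mul_row_col trmx0 !mul0mx !addr0 mulmx0 addr0.
Qed.

Lemma mul_Sigma_c_tr m (X : 'M[R]_(n, m)) : (s <= m)%N ->
  X *m Sigma_mx m m c *m X^T =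
  \sum_(0 <= i < s) c i *: (colN X i *m (colN X i)^T)
  + \sum_(s <= i < m) colN X i *m (colN X i)^T.
Proof.
move=> le_s_m; rewrite mul_Sigma_mx_tr (big_cat_nat (leq0n s) le_s_m).
by congr (_ + _); apply: eq_big_nat => i /andP[le_s_i _]; rewrite c_eq1 // scale1r.
Qed.

Lemma mul_Sigma_e_tr m m' (X : 'M[R]_(n, m)) (Y : 'M[R]_(n, m')) : (s <= m')%N ->
  X *m Sigma_mx m m' e *m Y^T = \sum_(0 <= i < s) e i *: (colN X i *m (colN Y i)^T).
Proof.
move=> le_s_m'; rewrite mul_Sigma_mx_tr (big_cat_nat (leq0n s) le_s_m') /=.
rewrite [X in _ + X]big_nat_cond [X in _ + X]big1 ?addr0 // => i /andP[/andP[le_s_i _] _].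
by rewrite e_eq0 // scale0r.
Qed.

Lemma gram_proj_leftE :
  gram_proj (row_mx A 0) M =
    \sum_(0 <= i < s) c i *: (colN A i *m (colN A i)^T)
  - \sum_(0 <= i < s) e i *: (colN A i *m (colN B i)^T)
  + \sum_(s <= i < p) colN A i *m (colN A i)^T.
Proof. by rewrite gram_proj_left mul_Sigma_c_tr // mul_Sigma_e_tr // addrAC. Qed.

Lemma gram_proj_rightE :
  gram_proj (row_mx 0 B) M =
    \sum_(0 <= i < s) c i *: (colN B i *m (colN B i)^T)
  - \sum_(0 <= i < s) e i *: (colN B i *m (colN A i)^T)
  + \sum_(s <= i < k) colN B i *m (colN B i)^T.
Proof. by rewrite gram_proj_right mul_Sigma_c_tr // mul_Sigma_e_tr // addrAC. Qed.

End TwoFrames.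

Lemma Sigma_quad_ge (R : realDomainType) m (u : 'cV[R]_m) (c : nat -> R) :
  (forall i, 1 <= c i) -> (u^T *m u) 0 0 <= (u^T *m Sigma_mx m m c *m u) 0 0.
Proof.
move=> c_ge1.
have uuE : u^T *m u = u^T *m Sigma_mx m m (fun=> 1) *m u^T^T.
  by rewrite -Sigma_mx1 mulmx1 trmxK.
have uCuE : u^T *m Sigma_mx m m c *m u = u^T *m Sigma_mx m m c *m u^T^T by rewrite trmxK.
rewrite uuE uCuE !mul_Sigma_mx_tr !summxE; apply: ler_sum => i _.
rewrite !mxE mul1r ler_peMl // big_ord1 !mxE -expr2.
exact: sqr_ge0.
Qed.

Lemma enormE (R : rcfType) n (v : 'cV[R]_n) : enorm v = Num.sqrt ((v^T *m v) 0 0).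
Proof. by rewrite /enorm mxE; congr Num.sqrt; apply: eq_bigr => k _; rewrite mxE expr2. Qed.

Lemma enorm_trmx_le (R : rcfType) n m (A : 'M[R]_(n, m)) (P : 'M[R]_n) c x :
  (forall i, 1 <= c i) -> P *m P^T = A *m Sigma_mx m m c *m A^T ->
  enorm (A^T *m x) <= enorm (P^T *m x).
Proof.
move=> c_ge1 PPtE; rewrite !enormE; apply: ler_wsqrtr.
have -> : (P^T *m x)^T *m (P^T *m x) = (A^T *m x)^T *m Sigma_mx m m c *m (A^T *m x).
  by rewrite !trmx_mul !trmxK !mulmxA -(mulmxA _ P) PPtE !mulmxA.
exact: Sigma_quad_ge.
Qed.

Lemma colN_tailcols (R : pzRingType) n p r (X : 'M[R]_(n, p)) j :
  colN (tailcols r X) j = colN X (r + j).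
Proof.
apply/matrixP => a b; rewrite !mxE.
case: insubP => [u lt_j_pr uE|ge_j_pr]; case: insubP => [v lt_rj_p vE|ge_rj_p] //.
- by rewrite mxE; congr (X a _); apply: val_inj; rewrite /= uE vE.
- by move: ge_rj_p; rewrite -ltn_subRL lt_j_pr.
- by move: ge_j_pr; rewrite ltn_subRL lt_rj_p.
Qed.

Lemma tailcols_Sigma_mx (R : pzRingType) n p q r
    (X : 'M[R]_(n, p)) (Y : 'M[R]_(n, q)) (f : nat -> R) :
  X^T *m Y = Sigma_mx p q f ->
  (tailcols r X)^T *m tailcols r Y = Sigma_mx (p - r) (q - r) (fun i => f (r + i)%N).
Proof.
move=> XtY; apply/matrixP => i j.
have := congr1 (fun N : 'M_(p, q) => N (shift_ord i) (shift_ord j)) XtY.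
rewrite !mxE /= eqn_add2l => <-.
by apply: eq_bigr => l _; rewrite !mxE.
Qed.

Lemma big_nat_shift (V : nmodType) r a b (F : nat -> V) : (r <= a)%N ->
  \sum_(a <= i < b) F i = \sum_(a - r <= j < b - r) F (r + j)%N.
Proof.
by move=> le_r_a; rewrite -{1}(subnK le_r_a) big_addn; under eq_bigr do rewrite addnC.
Qed.

Section PrincipalTails.
Variables (R : rcfType) (n p K r s : nat).
Variables (Zt : 'M[R]_(n, p)) (Wt : 'M[R]_(n, K)) (sigma : nat -> R).
Hypotheses (ZtZt : Zt^T *m Zt = 1%:M) (WtWt : Wt^T *m Wt = 1%:M).
Hypothesis ZtWt : Zt^T *m Wt = Sigma_mx p K sigma.
Hypothesis rs_le_min : (r + s <= minn p K)%N.
Hypothesis sigma_mid : forall i, (r <= i < r + s)%N -> 0 < sigma i < 1.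
Hypothesis sigma_tail : forall i, (r + s <= i)%N -> (i < minn p K)%N -> sigma i = 0.

Local Notation A := (tailcols r Zt).
Local Notation B := (tailcols r Wt).
(* [sigma] is unconstrained past [minn p K], hence the explicit cut-off at [s]. *)
Local Notation d := (fun j => if (j < s)%N then sigma (r + j) else 0).

Fact le_s_pr : (s <= p - r)%N. Proof. lia. Qed.
Fact le_s_Kr : (s <= K - r)%N. Proof. lia. Qed.

Lemma tail_AtA : A^T *m A = 1%:M.
Proof.
have ZtZtE : Zt^T *m Zt = Sigma_mx p p (fun=> 1) by rewrite -Sigma_mx1.
by rewrite (tailcols_Sigma_mx _ ZtZtE) -Sigma_mx1.
Qed.

Lemma tail_BtB : B^T *m B = 1%:M.
Proof.
have WtWtE : Wt^T *m Wt = Sigma_mx K K (fun=> 1) by rewrite -Sigma_mx1.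
by rewrite (tailcols_Sigma_mx _ WtWtE) -Sigma_mx1.
Qed.

Lemma tail_AtB : A^T *m B = Sigma_mx (p - r) (K - r) d.
Proof.
rewrite (tailcols_Sigma_mx _ ZtWt); apply: Sigma_mx_eq => j lt_j_pr lt_j_Kr /=.
by case: ltnP => // le_s_j; apply: sigma_tail; lia.
Qed.

Lemma tail_d_eq0 j : (s <= j)%N -> d j = 0.
Proof. by rewrite /= ltnNge => ->. Qed.

Lemma tail_d_sqr_lt1 j : d j ^+ 2 < 1.
Proof.
rewrite /=; case: ltnP => lt_j_s; last by rewrite expr0n ltr01.
have /andP[sigma_gt0 sigma_lt1] : 0 < sigma (r + j) < 1 by apply: sigma_mid; lia.
by rewrite expr_lt1 ?ltW.
Qed.

Lemma tail_d_sqr_neq1 j : 1 - d j ^+ 2 != 0.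
Proof. by rewrite subr_eq0 gt_eqF ?tail_d_sqr_lt1. Qed.

Lemma tail_gram_unit : (row_mx A B)^T *m row_mx A B \in unitmx.
Proof.
exact: (gram_row_mx_unit tail_AtA tail_BtB tail_AtB le_s_pr le_s_Kr tail_d_eq0 tail_d_sqr_neq1).
Qed.

Lemma tail_proj_leftE :
  gram_proj (row_mx A 0) (row_mx A B) =
    \sum_(r <= i < r + s) (1 - sigma i ^+ 2)^-1 *: (colN Zt i *m (colN Zt i)^T)
  - \sum_(r <= i < r + s) (sigma i / (1 - sigma i ^+ 2)) *: (colN Zt i *m (colN Wt i)^T)
  + \sum_(r + s <= i < p) colN Zt i *m (colN Zt i)^T.
Proof.
rewrite (gram_proj_leftE tail_AtA tail_BtB tail_AtB le_s_pr le_s_Kr tail_d_eq0 tail_d_sqr_neq1).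
rewrite !(big_nat_shift (r := r) (a := r) (r + s)) // subnn addKn.
rewrite (big_nat_shift (r := r) (a := r + s) p) ?leq_addr // addKn.
by congr (_ - _ + _); apply: eq_big_nat => i /andP[_ lt_i]; rewrite !colN_tailcols /= ?lt_i.
Qed.

Lemma tail_proj_rightE :
  gram_proj (row_mx 0 B) (row_mx A B) =
    \sum_(r <= i < r + s) (1 - sigma i ^+ 2)^-1 *: (colN Wt i *m (colN Wt i)^T)
  - \sum_(r <= i < r + s) (sigma i / (1 - sigma i ^+ 2)) *: (colN Wt i *m (colN Zt i)^T)
  + \sum_(r + s <= i < K) colN Wt i *m (colN Wt i)^T.
Proof.
rewrite (gram_proj_rightE tail_AtA tail_BtB tail_AtB le_s_pr le_s_Kr tail_d_eq0 tail_d_sqr_neq1).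
rewrite !(big_nat_shift (r := r) (a := r) (r + s)) // subnn addKn.
rewrite (big_nat_shift (r := r) (a := r + s) K) ?leq_addr // addKn.
by congr (_ - _ + _); apply: eq_big_nat => i /andP[_ lt_i]; rewrite !colN_tailcols /= ?lt_i.
Qed.

Lemma enorm_tail_proj_left x :
  enorm (A^T *m x) <= enorm ((gram_proj (row_mx A 0) (row_mx A B))^T *m x).
Proof.
apply: (enorm_trmx_le x _ (gram_proj_left_mul_tr tail_AtA tail_BtB tail_AtB
  le_s_pr le_s_Kr tail_d_eq0 tail_d_sqr_neq1)).
by move=> i; rewrite invf_ge1 ?subr_gt0 ?tail_d_sqr_lt1 // lerBlDr lerDl sqr_ge0.
Qed.

End PrincipalTails.

Theorem lemma1 (R : rcfType) (n p K r s : nat)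
  (Z : 'M[R]_(n, p)) (W : 'M[R]_(n, K)) (U : 'M[R]_p) (V : 'M[R]_K)
  (sigma : nat -> R)
  (hZ : Z^T *m Z = 1%:M) (hW : W^T *m W = 1%:M)
  (hU : U^T *m U = 1%:M) (hV : V^T *m V = 1%:M)
  (hrs : (r + s <= minn p K)%N)
  (hsig1 : forall i : nat, (i < r)%N -> sigma i = 1)
  (hsigmid : forall i : nat, (r <= i < r + s)%N -> 0 < sigma i < 1)
  (hsigdec : forall i j : nat, (r <= i)%N -> (i <= j)%N -> (j < r + s)%N -> sigma j <= sigma i)
  (hsig0 : forall i : nat, (r + s <= i)%N -> (i < minn p K)%N -> sigma i = 0)
  (hsvd : Z^T *m W = U *m Sigma_mx p K sigma *m V^T) :
  let Zt := Z *m U in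
  let Wt := W *m V in
  let M := Mmat r Zt Wt in
  let P_C := PC r Zt Wt in
  let P_N := PN r Zt Wt in
  let Pm := M *m invmx (M^T *m M) *m M^T in
  (* (i) *)
  (P_C + P_N = Pm /\ Pm^T = Pm /\ Pm *m Pm = Pm /\ (Pm == M^T)%MS)
  (* (ii) *)
  /\ P_C = \sum_(r <= i < r + s) (1 - sigma i ^+ 2)^-1 *: (colN Zt i *m (colN Zt i)^T)
           - \sum_(r <= i < r + s) (sigma i / (1 - sigma i ^+ 2)) *: (colN Zt i *m (colN Wt i)^T)
           + \sum_(r + s <= i < p) colN Zt i *m (colN Zt i)^T
  /\ P_N = \sum_(r <= i < r + s) (1 - sigma i ^+ 2)^-1 *: (colN Wt i *m (colN Wt i)^T)
           - \sum_(r <= i < r + s) (sigma i / (1 - sigma i ^+ 2)) *: (colN Wt i *m (colN Zt i)^T)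
           + \sum_(r + s <= i < K) colN Wt i *m (colN Wt i)^T
  (* (iii) *)
  /\ (forall x y : 'cV[R]_n,
        (x^T <= (tailcols r Zt)^T)%MS -> (y^T <= (tailcols r Wt)^T)%MS ->
        P_C *m (x + y) = x /\ P_N *m (x + y) = y)
  (* (iv) *)
  /\ (forall x : 'cV[R]_n, enorm ((tailcols r Zt)^T *m x) <= enorm (P_C^T *m x)).
Proof.
move=> Zt Wt M P_C P_N Pm.
have ZtZt : Zt^T *m Zt = 1%:M by rewrite trmx_mul -mulmxA (mulmxA Z^T) hZ mul1mx hU.
have WtWt : Wt^T *m Wt = 1%:M by rewrite trmx_mul -mulmxA (mulmxA W^T) hW mul1mx hV.
have ZtWt : Zt^T *m Wt = Sigma_mx p K sigma.
  by rewrite trmx_mul -mulmxA (mulmxA Z^T) hsvd !mulmxA hU mul1mx -mulmxA hV mulmx1.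
have gram_unit := tail_gram_unit ZtZt WtWt ZtWt hrs hsigmid hsig0.
have PmE : Pm = gram_proj M M by [].
have PCE : P_C = gram_proj (row_mx (tailcols r Zt) 0) M by [].
have PNE : P_N = gram_proj (row_mx 0 (tailcols r Wt)) M by [].
split; first split.
- by rewrite PCE PNE PmE gram_projDl add_row_mx addr0 add0r.
- rewrite PmE; split; first exact: trmx_gram_proj_self.
  by split; [exact: gram_proj_self_idem | exact: eqmx_gram_proj_self].
split; first by rewrite PCE (tail_proj_leftE ZtZt WtWt ZtWt hrs hsigmid hsig0).
split; first by rewrite PNE (tail_proj_rightE ZtZt WtWt ZtWt hrs hsigmid hsig0).
split; first by move=> x y; rewrite PCE PNE; apply: gram_proj_row_mx_split.
by move=> x; rewrite PCE; apply: (enorm_tail_proj_left ZtZt WtWt ZtWt hrs hsigmid hsig0).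
Qed.
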